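(* Let $(S,V)$ be a complete semiring-semimodule pair, let $n\ge1$, let $\Gamma$ be an alphabet, and let $M\in (S^{n\times n})^{\Gamma^*\times\Gamma^*}$ be a pushdown transition matrix. Then for all $k\ge1$, $p_1,\dots,p_k\in\Gamma$ and $0\le l\le n$, $$(M^{\omega,l})_{p_1\dots p_k}=\sum_{1\le j\le k}(M^* )_{p_1\dots p_{j-1},\epsilon}\,(M^{\omega,l})_{p_j}.$$
   Context: A complete semiring-semimodule pair $(S,V)$ (in the sense of Ésik and Kuich, ''Modern Automata Theory'') consists of a complete starsemiring $S$ (arbitrary sums with infinite associativity/commutativity/distributivity laws, star $s^*=\sum_{j\ge0}s^j$) and a complete $S$-semimodule $V$, with infinite products $\prod_{j\ge1}s_j\in V$ of sequences in $S$ satisfying the axioms of that framework. $M\in (S^{n\times n})^{\Gamma^*\times\Gamma^*}$ (a $\Gamma^*\times\Gamma^*$ matrix with $n\times n$ blocks over $S$) is a pushdown transition matrix if (i) for each $p\in\Gamma$ only finitely many blocks $M_{p,\pi}$ are nonzero, and (ii) $M_{\pi_1,\pi_2}=M_{p,\pi}$ if $\pi_1=p\pi'$, $\pi_2=\pi\pi'$ for some $p\in\Gamma$, $\pi,\pi'\in\Gamma^*$, and $0$ otherwise. $M^*=\sum_{m\ge0}M^m$ with blocks $(M^* )_{\pi,\pi'}$; $p_1\dots p_0=\epsilon$. Let $P_l=\{(j_1,j_2,\dots)\in\{1,\dots,n\}^\omega\mid j_t\le l\text{ for infinitely many }t\}$. Then $M^{\omega,l}\in (V^n)^{\Gamma^*}$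 is the column vector with $$((M^{\omega,l})_\pi)_i=\sum_{\pi_1,\pi_2,\ldots\in\Gamma^*}\ \sum_{(j_1,j_2,\ldots)\in P_l}(M_{\pi,\pi_1})_{i,j_1}(M_{\pi_1,\pi_2})_{j_1,j_2}(M_{\pi_2,\pi_3})_{j_2,j_3}\cdots,$$ i.e. the sum of weights of all infinite paths from $(\pi,i)$ in the graph on $\Gamma^*\times\{1,\dots,n\}$ with adjacency matrix $M$ that visit vertices $(\pi',i')$ with $i'\le l$ infinitely often. *)

From mathcomp Require Import all_boot.

Set Implicit Arguments.
Unset Strict Implicit.
Unset Printing Implicit Defensive.

Record CSemiring := {
  scar :> Type;
  sadd : scar -> scar -> scar;
  smul : scar -> scar -> scar;
  szero : scar;
  sone : scar;
  ssum : forall I : Type, (I -> scar) -> scar;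
  saddA : forall a b c, sadd a (sadd b c) = sadd (sadd a b) c;
  saddC : forall a b, sadd a b = sadd b a;
  sadd0 : forall a, sadd szero a = a;
  smulA : forall a b c, smul a (smul b c) = smul (smul a b) c;
  smul1l : forall a, smul sone a = a;
  smul1r : forall a, smul a sone = a;
  smulDl : forall a b c, smul (sadd a b) c = sadd (smul a c) (smul b c);
  smulDr : forall a b c, smul a (sadd b c) = sadd (smul a b) (smul a c);
  smul0l : forall a, smul szero a = szero;
  smul0r : forall a, smul a szero = szero;
  ssum_empty : forall (I : Type) (f : I -> scar), (I -> False) -> ssum f = szero;
  ssum_single : forall (I : Type) (f : I -> scar) (i0 : I),
      (forall i, i = i0) -> ssum f = f i0;
  ssum_two : forall f : bool -> scar, ssum f = sadd (f true) (f false);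
  (* generalized associativity/commutativity: partition of the index set
     into the fibres of g *)
  ssum_partition : forall (I J : Type) (g : I -> J) (f : I -> scar),
      ssum f = ssum (fun j : J => ssum (fun i : {i : I | g i = j} => f (proj1_sig i)));
  ssum_mull : forall (a : scar) (I : Type) (f : I -> scar),
      smul a (ssum f) = ssum (fun i => smul a (f i));
  ssum_mulr : forall (a : scar) (I : Type) (f : I -> scar),
      smul (ssum f) a = ssum (fun i => smul (f i) a)
}.

Definition spow (S : CSemiring) (s : S) (m : nat) : S := iter m (smul s) (sone S).
Definition sstar (S : CSemiring) (s : S) : S := ssum (fun m : nat => spow s m).

Definition sfinprod (S : CSemiring) (s : nat -> S) (a b : nat) : S :=
  foldr (fun j acc => smul (s j) acc) (sone S) (iota a (b - a)).

(* from 0 (the paper's s_1 is our s 0).                                *)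
Record CSemimodulePair (S : CSemiring) := {
  vcar :> Type;
  vadd : vcar -> vcar -> vcar;
  vzero : vcar;
  vsum : forall I : Type, (I -> vcar) -> vcar;
  vscale : S -> vcar -> vcar;
  vprod : (nat -> S) -> vcar;
  vaddA : forall a b c, vadd a (vadd b c) = vadd (vadd a b) c;
  vaddC : forall a b, vadd a b = vadd b a;
  vadd0 : forall a, vadd vzero a = a;
  vsum_empty : forall (I : Type) (f : I -> vcar), (I -> False) -> vsum f = vzero;
  vsum_single : forall (I : Type) (f : I -> vcar) (i0 : I),
      (forall i, i = i0) -> vsum f = f i0;
  vsum_two : forall f : bool -> vcar, vsum f = vadd (f true) (f false);
  vsum_partition : forall (I J : Type) (g : I -> J) (f : I -> vcar),
      vsum f = vsum (fun j : J => vsum (fun i : {i : I | g i = j} => f (proj1_sig i)));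
  vscaleA : forall (s t : S) v, vscale (smul s t) v = vscale s (vscale t v);
  vscale1 : forall v, vscale (sone S) v = v;
  vscaleDl : forall (s t : S) v, vscale (sadd s t) v = vadd (vscale s v) (vscale t v);
  vscaleDr : forall (s : S) v w, vscale s (vadd v w) = vadd (vscale s v) (vscale s w);
  vscale0l : forall v, vscale (szero S) v = vzero;
  vscale0r : forall s : S, vscale s vzero = vzero;
  vsum_scalel : forall (I : Type) (f : I -> S) (v : vcar),
      vscale (ssum f) v = vsum (fun i => vscale (f i) v);
  vsum_scaler : forall (s : S) (I : Type) (f : I -> vcar),
      vscale s (vsum f) = vsum (fun i => vscale s (f i));
  vprod_cons : forall s : nat -> S, vprod s = vscale (s 0) (vprod (fun j => s j.+1));
  vprod_group : forall (s : nat -> S) (nn : nat -> nat),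
      nn 0 = 0 -> (forall j, nn j < nn j.+1) ->
      vprod s = vprod (fun j => sfinprod s (nn j) (nn j.+1));
  vprod_sum : forall (I : nat -> Type) (f : forall j, I j -> S),
      vprod (fun j => ssum (f j)) =
      vsum (fun g : (forall j, I j) => vprod (fun j => f j (g j)))
}.

(* M pi1 pi2 i j = (M_{pi1,pi2})_{i,j}; states 1..n are 'I_n (0-based).*)
Section Matrices.
Variables (S : CSemiring) (Gamma : finType) (n : nat).

Definition bmx := seq Gamma -> seq Gamma -> 'I_n -> 'I_n -> S.

Definition bmx_mul (A B : bmx) : bmx := fun pi1 pi2 i j =>
  ssum (fun x : seq Gamma * 'I_n => smul (A pi1 x.1 i x.2) (B x.1 pi2 x.2 j)).

Definition bmx_one : bmx := fun pi1 pi2 i j =>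
  if (pi1 == pi2) && (i == j) then sone S else szero S.

Definition bmx_pow (A : bmx) (m : nat) : bmx := iter m (fun X => bmx_mul X A) bmx_one.

Definition bmx_star (A : bmx) : bmx := fun pi1 pi2 i j =>
  ssum (fun m : nat => bmx_pow A m pi1 pi2 i j).

Definition pushdown_transition (M : bmx) : Prop :=
  (forall p : Gamma, exists L : seq (seq Gamma),
      forall pi, pi \notin L -> forall i j, M [:: p] pi i j = szero S) /\
  (forall (p : Gamma) (pi pi' : seq Gamma) i j,
      M (p :: pi') (pi ++ pi') i j = M [:: p] pi i j) /\
  (forall pi1 pi2 : seq Gamma,
      ~ (exists (p : Gamma) (pi pi' : seq Gamma), pi1 = p :: pi' /\ pi2 = pi ++ pi') ->
      forall i j, M pi1 pi2 i j = szero S).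

Definition inf_often (P : nat -> Prop) : Prop := forall N, exists t, N <= t /\ P t.

(* P_l : state sequences (0-based states) with a state in {1..l}
   (i.e. 0-based index < l) infinitely often *)
Definition Pl (l : nat) (js : nat -> 'I_n) : Prop := inf_often (fun t => js t < l).

Variable V : CSemimodulePair S.

(* weight sequence of the infinite path (pi,i) -> (pis 0, js 0) -> (pis 1, js 1) -> ... *)
Definition path_weights (M : bmx) (pi : seq Gamma) (i : 'I_n)
    (pis : nat -> seq Gamma) (js : nat -> 'I_n) : nat -> S :=
  fun t => match t with
           | 0 => M pi (pis 0) i (js 0)
           | t'.+1 => M (pis t') (pis t'.+1) (js t') (js t'.+1)
           end.

Definition omega_l (M : bmx) (l : nat) (pi : seq Gamma) (i : 'I_n) : V :=
  vsum (fun x : {x : (nat -> seq Gamma) * (nat -> 'I_n) | Pl l x.2} =>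
          vprod V (path_weights M pi i (proj1_sig x).1 (proj1_sig x).2)).

End Matrices.

From mathcomp Require Import all_boot.
From Stdlib Require Import ProofIrrelevance FunctionalExtensionality ClassicalEpsilon Classical.

Set Implicit Arguments.
Unset Strict Implicit.
Unset Printing Implicit Defensive.

(* By induction on k, splitting off the last letter, it suffices to show that
   for all stacks sigma and rho
     (M^{omega,l})_{sigma rho} = (M^{omega,l})_sigma + M^*_{sigma,eps} (M^{omega,l})_rho.
   Since M is a pushdown matrix, a step from a stack tau rho with tau nonempty
   is a step from tau with rho appended, and has the same weight.  Hence an
   infinite path from (sigma rho, i) either never reaches the stack rho, and is
   then a path from (sigma, i) with rho appended to every stack, or it reaches
   rho for the first time after a finite path from (sigma, i) to some (eps, q)
   with rho appended, and then continues as an arbitrary path from (rho, q).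
   This is a weight-preserving bijection between the supports of both sides,
   and the condition P_l does not see finite prefixes. *)

Lemma proj1_sig_inj (A : Type) (P : A -> Prop) : injective (@proj1_sig A P).
Proof. by case=> a pa [b pb] /= eab; subst b; f_equal; apply: proof_irrelevance. Qed.

Section CompleteSums.
Variables (T : Type) (add : T -> T -> T) (zero : T)
  (sum : forall I : Type, (I -> T) -> T).
Hypothesis addC : forall a b, add a b = add b a.
Hypothesis add0 : forall a, add zero a = a.
Hypothesis sum_single : forall (I : Type) (f : I -> T) (i0 : I),
  (forall i, i = i0) -> sum f = f i0.
Hypothesis sum_two : forall f : bool -> T, sum f = add (f true) (f false).
Hypothesis sum_partition : forall (I J : Type) (g : I -> J) (f : I -> T),
  sum f = sum (fun j : J => sum (fun i : {i : I | g i = j} => f (proj1_sig i))).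
Hypothesis sum_zero : forall I : Type, sum (fun _ : I => zero) = zero.

Lemma eq_sum (I : Type) (f g : I -> T) : (forall i, f i = g i) -> sum f = sum g.
Proof. by move=> efg; rewrite (functional_extensionality f g efg). Qed.

Lemma reindex_sum (I J : Type) (h : J -> I) (f : I -> T) :
  injective h -> (forall i, exists j, h j = i) -> sum f = sum (fun j => f (h j)).
Proof.
move=> h_inj h_surj; rewrite (sum_partition h (fun j => f (h j))).
apply: eq_sum => i; have [j0 hj0] := constructive_indefinite_description _ (h_surj i).
rewrite (@sum_single _ _ (exist _ j0 hj0)) /= ?hj0 // => -[j hj].
by apply: proj1_sig_inj; apply: h_inj; rewrite /= hj hj0.
Qed.

Lemma sum_restrict (I : Type) (P : I -> Prop) (f : I -> T) :
  (forall i, ~ P i -> f i = zero) ->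
  sum f = sum (fun x : {i | P i} => f (proj1_sig x)).
Proof.
move=> f0; pose inP i := if excluded_middle_informative (P i) then true else false.
have inPP i : inP i = true <-> P i by rewrite /inP; case: excluded_middle_informative.
rewrite (sum_partition inP f) sum_two.
have -> : sum (fun x : {i | inP i = false} => f (proj1_sig x)) = zero.
  rewrite -(sum_zero {i | inP i = false}); apply: eq_sum => -[i /= inPi].
  by apply: f0 => /inPP; rewrite inPi.
rewrite addC add0.
have inP_sig (x : {i | P i}) : inP (proj1_sig x) = true by apply/inPP; exact: proj2_sig x.
rewrite (@reindex_sum _ _ (fun x => exist _ (proj1_sig x) (inP_sig x))) //.
- by move=> x y [] exy; apply: proj1_sig_inj.
- case=> j inPj; have Pj := proj1 (inPP j) inPj.
  by exists (exist _ j Pj); apply: proj1_sig_inj.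
Qed.

Lemma reindex_sum_support (I J : Type) (PI : I -> Prop) (PJ : J -> Prop)
    (f : I -> T) (g : J -> T) (h : J -> I) :
  (forall i, ~ PI i -> f i = zero) -> (forall j, ~ PJ j -> g j = zero) ->
  (forall j, PJ j -> PI (h j)) ->
  (forall j1 j2, PJ j1 -> PJ j2 -> h j1 = h j2 -> j1 = j2) ->
  (forall i, PI i -> exists j, PJ j /\ h j = i) ->
  (forall j, PJ j -> f (h j) = g j) -> sum f = sum g.
Proof.
move=> f0 g0 hP h_inj h_surj fhg; rewrite (sum_restrict f0) (sum_restrict g0).
rewrite (@reindex_sum _ _ (fun y => exist _ (h (proj1_sig y)) (hP _ (proj2_sig y)))).
- by apply: eq_sum => -[j PJj]; exact: fhg.
- by move=> [x Px] [y Py] [] /h_inj hxy; apply: proj1_sig_inj; exact: hxy.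
- case=> i PIi; have [j [PJj hji]] := h_surj i PIi.
  by exists (exist _ j PJj); apply: proj1_sig_inj.
Qed.

Lemma sum_pair (A B : Type) (f : A * B -> T) :
  sum f = sum (fun a => sum (fun b => f (a, b))).
Proof.
rewrite (sum_partition fst f); apply: eq_sum => a.
rewrite (@reindex_sum _ _ (fun b : B => exist (fun x : A * B => x.1 = a) (a, b) erefl)) //.
- by move=> b1 b2 [].
- by case=> -[a' b] /= ea; subst a'; exists b; apply: proj1_sig_inj.
Qed.

Lemma exchange_sum (A B : Type) (f : A -> B -> T) :
  sum (fun a => sum (fun b => f a b)) = sum (fun b => sum (fun a => f a b)).
Proof.
rewrite -(sum_pair (fun x => f x.1 x.2)) -(sum_pair (fun x => f x.2 x.1)).
rewrite (@reindex_sum _ _ (fun x : B * A => (x.2, x.1))) //.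
- by move=> [? ?] [? ?] [-> ->].
- by case=> a b; exists (b, a).
Qed.

Lemma sum_inl_inr (A B : Type) (f : A + B -> T) :
  sum f = add (sum (fun a => f (inl a))) (sum (fun b => f (inr b))).
Proof.
pose isl (x : A + B) := if x is inl _ then true else false.
rewrite (sum_partition isl f) sum_two; congr add.
- rewrite (@reindex_sum _ _ (fun a : A => exist (fun x => isl x = true) (inl a) erefl)) //.
  + by move=> a1 a2 [].
  + by case=> -[a|b] //= ea; exists a; apply: proj1_sig_inj.
- rewrite (@reindex_sum _ _ (fun b : B => exist (fun x => isl x = false) (inr b) erefl)) //.
  + by move=> b1 b2 [].
  + by case=> -[a|b] //= eb; exists b; apply: proj1_sig_inj.
Qed.

Lemma sum_pred1 (I : Type) (f : I -> T) (i0 : I) :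
  (forall i, i <> i0 -> f i = zero) -> sum f = f i0.
Proof.
move=> f0; rewrite (@sum_restrict _ (fun i => i = i0)) //.
rewrite (@sum_single _ _ (exist (fun i => i = i0) i0 erefl)) //.
by case=> i ei; apply: proj1_sig_inj.
Qed.

Lemma sum_ord_recr (k : nat) (F : nat -> T) :
  sum (fun j : 'I_k.+1 => F j) = add (sum (fun j : 'I_k => F j)) (F k).
Proof.
pose h (x : 'I_k + unit) : 'I_k.+1 :=
  if x is inl j then widen_ord (leqnSn k) j else ord_max.
rewrite (reindex_sum (h := h)) ?sum_inl_inr.
- by congr add; rewrite (@sum_single _ _ tt) //; case.
- case=> [j1|[]] [j2|[]] //= /(congr1 val) /= e12.
  + by congr inl; apply: val_inj.
  + by have := ltn_ord j1; rewrite e12 ltnn.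
  + by have := ltn_ord j2; rewrite -e12 ltnn.
- move=> j; case: (ltnP j k) => [jk|kj]; first by exists (inl (Ordinal jk)); apply: val_inj.
  by exists (inr tt); apply: val_inj; apply/eqP; rewrite /= eqn_leq kj -ltnS ltn_ord.
Qed.

End CompleteSums.

Section CompletePair.
Variables (S : CSemiring) (V : CSemimodulePair S).

Lemma ssum0 (I : Type) : ssum (fun _ : I => szero S) = szero S.
Proof.
have := ssum_mull (szero S) (fun _ : I => szero S); rewrite smul0l => e0.
rewrite [RHS]e0; apply: eq_sum => i; by rewrite smul0l.
Qed.

Lemma vsum0 (I : Type) : vsum (fun _ : I => vzero V) = vzero V.
Proof.
have := vsum_scaler (szero S) (fun _ : I => vzero V); rewrite vscale0l => e0.
rewrite [RHS]e0; apply: eq_sum => i; by rewrite vscale0l.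
Qed.

Definition reindex_ssum := reindex_sum (@ssum_single S) (@ssum_partition S).
Definition ssum_pair := sum_pair (@ssum_single S) (@ssum_partition S).
Definition exchange_ssum := exchange_sum (@ssum_single S) (@ssum_partition S).
Definition ssum_pred1 := sum_pred1 (@saddC S) (@sadd0 S) (@ssum_single S)
  (@ssum_two S) (@ssum_partition S) ssum0.

Definition vsum_pair := sum_pair (@vsum_single S V) (@vsum_partition S V).
Definition exchange_vsum := exchange_sum (@vsum_single S V) (@vsum_partition S V).
Definition vsum_inl_inr :=
  sum_inl_inr (@vsum_single S V) (@vsum_two S V) (@vsum_partition S V).
Definition vsum_pred1 := sum_pred1 (@vaddC S V) (@vadd0 S V) (@vsum_single S V)
  (@vsum_two S V) (@vsum_partition S V) vsum0.
Definition reindex_vsum_support := reindex_sum_support (@vaddC S V) (@vadd0 S V)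
  (@vsum_single S V) (@vsum_two S V) (@vsum_partition S V) vsum0.
Definition vsum_ord_recr :=
  sum_ord_recr (@vsum_single S V) (@vsum_two S V) (@vsum_partition S V).

Lemma vprod_eq0 (s : nat -> S) t : s t = szero S -> vprod V s = vzero V.
Proof.
elim: t s => [|t IH] s st0; rewrite vprod_cons; first by rewrite st0 vscale0l.
by rewrite (IH (fun j => s j.+1)) // vscale0r.
Qed.

Fixpoint sprefix (s : nat -> S) (m : nat) : S :=
  if m is m'.+1 then smul (s 0) (sprefix (fun t => s t.+1) m') else sone S.

Lemma vprod_split (s : nat -> S) m :
  vprod V s = vscale (sprefix s m) (vprod V (fun t => s (t + m))).
Proof.
elim: m s => [|m IH] s /=.
  by rewrite vscale1; congr (vprod V); apply: functional_extensionality => t; rewrite addn0.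
rewrite [LHS]vprod_cons [in LHS]IH -vscaleA; do 2 f_equal.
by apply: functional_extensionality => t; rewrite addnS.
Qed.

End CompletePair.

Lemma Pl_shift n l m (js js' : nat -> 'I_n) :
  (forall t, js' (t + m) = js t) -> Pl l js <-> Pl l js'.
Proof.
move=> ejs; split=> Pjs N.
- have [t [Nt lt_t]] := Pjs N; exists (t + m); rewrite ejs; split=> //.
  exact: leq_trans Nt (leq_addr _ _).
- have [t [Nmt lt_t]] := Pjs (N + m).
  have mt : m <= t by rewrite (leq_trans _ Nmt) // leq_addl.
  by exists (t - m); rewrite -ejs subnK // leq_subRL // addnC.
Qed.

Definition unsuffix (T : Type) (rho s : seq T) : seq T := take (size s - size rho) s.

Lemma unsuffixK (T : Type) (rho tau : seq T) : unsuffix rho (tau ++ rho) = tau.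
Proof. by rewrite /unsuffix size_cat addnK take_size_cat. Qed.

Lemma cat_nonnil_neq (T : Type) (tau rho : seq T) : tau <> [::] -> tau ++ rho <> rho.
Proof.
case: tau => [|a tau] // _ /(congr1 size)/eqP; rewrite size_cat /=.
by rewrite -[X in _ == X]add0n eqn_add2r.
Qed.

Lemma cat_injl (T : Type) (rho : seq T) : injective (cat^~ rho).
Proof. by move=> a b eab; rewrite -(unsuffixK rho a) eab unsuffixK. Qed.

Section Pushdown.
Variables (S : CSemiring) (V : CSemimodulePair S) (n : nat) (Gamma : finType)
  (M : bmx S Gamma n).
Hypothesis pushdownM : pushdown_transition M.

Notation stack := (seq Gamma).
Notation vertex := (stack * 'I_n)%type.

Definition weight (a b : vertex) : S := M a.1 b.1 a.2 b.2.

Definition step (a b : vertex) : Prop :=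
  exists p pi tau, a.1 = p :: tau /\ b.1 = pi ++ tau.

Definition lift (rho : stack) (v : vertex) : vertex := (v.1 ++ rho, v.2).
Definition unlift (rho : stack) (v : vertex) : vertex := (unsuffix rho v.1, v.2).

Lemma liftK rho : cancel (lift rho) (unlift rho).
Proof. by case=> s q; rewrite /lift /unlift /= unsuffixK. Qed.

Lemma unliftK rho v tau : v.1 = tau ++ rho -> lift rho (unlift rho v) = v.
Proof. by case: v => s q /= ->; rewrite /lift /unlift /= unsuffixK. Qed.

Lemma weight_nonstep a b : ~ step a b -> weight a b = szero S.
Proof. by move=> nab; case: pushdownM => _ [_ M0]; exact: M0. Qed.

Lemma weight_lift rho a b : step a b -> weight (lift rho a) (lift rho b) = weight a b.
Proof.
case: a b => [s q] [s' q'] [p [pi [tau [/= -> ->]]]].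
by case: pushdownM => _ [Mcat _]; rewrite /weight /= -catA !Mcat.
Qed.

Lemma step_lift rho a b : step a b -> step (lift rho a) (lift rho b).
Proof.
by case=> p [pi [tau [ea eb]]]; exists p, pi, (tau ++ rho); rewrite /= ea eb catA.
Qed.

Lemma step_src_nonnil a b : step a b -> a.1 <> [::].
Proof. by case=> p [pi [tau [-> _]]]. Qed.

Lemma step_unlift rho a b : a.1 <> [::] ->
  step (lift rho a) (lift rho b) -> step a b.
Proof.
case: a => -[|p tau] q //= _ [p' [pi [tau' [[_ <-] eb]]]].
by exists p, pi, tau; split=> //; apply: (@cat_injl _ rho); rewrite /= -catA -eb.
Qed.

Lemma step_suffix rho tau q b : tau <> [::] -> step (tau ++ rho, q) b ->
  exists tau', b.1 = tau' ++ rho.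
Proof.
case: tau => [|p tau] // _ [p' [pi [tau' [/= [_ <-] ->]]]].
by exists (pi ++ tau); rewrite catA.
Qed.

Lemma step_unsuffix rho a b :
  (exists tau, a.1 = tau ++ rho) -> (exists tau, b.1 = tau ++ rho) -> a.1 <> rho ->
  step a b -> step (unlift rho a) (unlift rho b).
Proof.
move=> [tau ea] [tau' eb] a_rho; rewrite -(unliftK ea) -(unliftK eb) !liftK.
apply: step_unlift; rewrite /unlift /= ea unsuffixK => tau0.
by apply: a_rho; rewrite ea tau0.
Qed.

Lemma stack_suffix_until (w : nat -> vertex) rho t :
  (forall s, step (w s) (w s.+1)) -> (exists tau, (w 0).1 = tau ++ rho) ->
  (forall s, s < t -> (w s).1 <> rho) -> exists tau, (w t).1 = tau ++ rho.
Proof.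
move=> w_walk w0; elim: t => [|t IH] // not_rho.
have [tau wt] := IH (fun s st => not_rho s (ltnW st)).
have tau_nonnil : tau <> [::] by move=> tau0; apply: (not_rho t); rewrite // wt tau0.
apply: (step_suffix (q := (w t).2) tau_nonnil).
by rewrite -wt -surjective_pairing.
Qed.

Definition walk (a : vertex) (pis : nat -> stack) (js : nat -> 'I_n) (t : nat) : vertex :=
  if t is t'.+1 then (pis t', js t') else a.

Lemma walk_shift a pis js m t :
  walk (walk a pis js m) (fun s => pis (s + m)) (fun s => js (s + m)) t =
  walk a pis js (t + m).
Proof. by case: t => [|t] //=; rewrite addSn. Qed.

Definition is_walk a pis js := forall t, step (walk a pis js t) (walk a pis js t.+1).

Lemma path_weightsE pi i pis js t :
  path_weights M pi i pis js t = weight (walk (pi, i) pis js t) (walk (pi, i) pis js t.+1).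
Proof. by case: t. Qed.

Lemma vprod_nonwalk pi i pis js : ~ is_walk (pi, i) pis js ->
  vprod V (path_weights M pi i pis js) = vzero V.
Proof.
move=> /not_all_ex_not [t nstep]; apply: (@vprod_eq0 _ _ _ t).
by rewrite path_weightsE weight_nonstep.
Qed.

Fixpoint fin_weight (a : vertex) (u : seq vertex) : S :=
  if u is b :: u' then smul (weight a b) (fin_weight b u') else sone S.

Fixpoint fin_walk (a : vertex) (u : seq vertex) : Prop :=
  if u is b :: u' then step a b /\ fin_walk b u' else True.

Lemma fin_weight_nonwalk a u : ~ fin_walk a u -> fin_weight a u = szero S.
Proof.
elim: u a => [|b u IH] a //= not_walk.
have [ab|nab] := classic (step a b); last by rewrite weight_nonstep // smul0l.
by rewrite IH ?smul0r // => bu; apply: not_walk.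
Qed.

Lemma fin_weight_rcons a u b :
  fin_weight a (rcons u b) = smul (fin_weight a u) (weight (last a u) b).
Proof.
elim: u a => [|c u IH] a /=; first by rewrite smul1r smul1l.
by rewrite IH smulA.
Qed.

Lemma fin_walk_nth a u : fin_walk a u <->
  (forall t, t < size u -> step (nth a (a :: u) t) (nth a (a :: u) t.+1)).
Proof.
elim: u a => [|b u IH] a /=; first by split.
have nth_ab t : t < size u -> nth a (b :: u) t = nth b (b :: u) t /\ nth a u t = nth b u t.
  by move=> tu; rewrite !(set_nth_default b a) // ltnW.
split.
- case=> ab /IH bu [|t] //= tu.
  by have [-> ->] := nth_ab t tu; exact: bu.
- move=> au; split; first exact: (au 0).
  by apply/IH => t tu; have := au t.+1 tu; have [/= -> ->] := nth_ab t tu.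
Qed.

Lemma sprefix_fin_weight u a (s : nat -> S) :
  (forall t, t < size u -> s t = weight (nth a (a :: u) t) (nth a u t)) ->
  sprefix s (size u) = fin_weight a u.
Proof.
elim: u a s => [|b u IH] a s //= es.
rewrite (es 0) //; congr smul; apply: IH => t tu.
by rewrite (es t.+1) //= !(set_nth_default b a) // ltnW.
Qed.

Lemma bmx_powE m pi1 pi2 i j : bmx_pow M m pi1 pi2 i j =
  ssum (fun u : {u : seq vertex | size u = m} =>
    if last (pi1, i) (proj1_sig u) == (pi2, j) then fin_weight (pi1, i) (proj1_sig u)
    else szero S).
Proof.
elim: m pi2 j => [|m IH] pi2 j.
  rewrite (@ssum_single S _ _ (exist (fun u : seq vertex => size u = 0) [::] erefl)) //.
  by case=> -[|b u] // u0; apply: proj1_sig_inj.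
change (bmx_pow M m.+1 pi1 pi2 i j) with
  (ssum (fun x : vertex => smul (bmx_pow M m pi1 x.1 i x.2) (weight x (pi2, j)))).
under eq_sum => x do rewrite IH ssum_mulr.
have size_rcons_sig (u : {u : seq vertex | size u = m}) b :
    size (rcons (proj1_sig u) b) = m.+1.
  by rewrite size_rcons (proj2_sig u).
rewrite exchange_ssum (@reindex_ssum _ _ _ (fun x : {u | size u = m} * vertex =>
  exist (fun u : seq vertex => size u = m.+1) _ (size_rcons_sig x.1 x.2))).
- rewrite ssum_pair; apply: eq_sum => u.
  rewrite (@ssum_pred1 _ _ _ (last (pi1, i) (proj1_sig u))); last first.
    move=> x ux; rewrite -surjective_pairing ifN ?smul0l //.
    by apply/eqP => ex; exact: ux (esym ex).
  rewrite -surjective_pairing eqxx (@ssum_pred1 _ _ _ (pi2, j)) /=.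
    by rewrite last_rcons eqxx fin_weight_rcons.
  by move=> b b_pj; rewrite last_rcons ifN //; apply/eqP.
- by move=> [u1 b1] [u2 b2] [] /rcons_inj [] /proj1_sig_inj -> ->.
- case=> u'; case/lastP: u' => [|u b] // ub.
  have um : size u = m by move: ub; rewrite size_rcons => -[].
  by exists (exist _ u um, b); apply: proj1_sig_inj.
Qed.

Lemma bmx_starE pi1 pi2 i j : bmx_star M pi1 pi2 i j =
  ssum (fun u : seq vertex =>
    if last (pi1, i) u == (pi2, j) then fin_weight (pi1, i) u else szero S).
Proof. by rewrite (ssum_partition size); apply: eq_sum => m; exact: bmx_powE. Qed.

Lemma bmx_star_nil i q : bmx_star M [::] [::] i q = if i == q then sone S else szero S.
Proof.
rewrite bmx_starE (@ssum_pred1 _ _ _ [::]) /=; first by rewrite xpair_eqE eqxx.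
case=> [|b u] // _; rewrite /= weight_nonstep ?smul0l ?if_same //.
by case=> p [pi [tau []]].
Qed.

Section Decomposition.
Variables (l : nat) (sigma rho : stack) (i : 'I_n).

Notation paths := {x : (nat -> stack) * (nat -> 'I_n) | Pl l x.2}.
Notation a0 := (sigma, i).
Notation pwalk a x := (walk a (proj1_sig x).1 (proj1_sig x).2).

Lemma paths_eq_walk (x y : paths) a b :
  (forall t, pwalk a x t.+1 = pwalk b y t.+1) -> x = y.
Proof.
case: x => -[pis js] Px; case: y => -[pis' js'] Py /= exy; apply: proj1_sig_inj => /=.
by congr pair; apply: functional_extensionality => t; case: (exy t).
Qed.

Definition cat_stacks (u : seq vertex) (pis : nat -> stack) (t : nat) : stack :=
  if t < size u then (nth a0 u t).1 ++ rho else pis (t - size u).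

Definition cat_states (u : seq vertex) (js : nat -> 'I_n) (t : nat) : 'I_n :=
  if t < size u then (nth a0 u t).2 else js (t - size u).

Lemma Pl_cat_states u (x : paths) : Pl l (cat_states u (proj1_sig x).2).
Proof.
apply/(@Pl_shift _ _ (size u) (proj1_sig x).2); last exact: proj2_sig x.
by move=> t; rewrite /cat_states ltnNge leq_addl /= addnK.
Qed.

Definition glue (z : paths + seq vertex * paths) : paths :=
  match z with
  | inl x => exist (fun y => Pl l y.2)
               (fun t => (proj1_sig x).1 t ++ rho, (proj1_sig x).2) (proj2_sig x)
  | inr (u, x) => exist (fun y => Pl l y.2)
               (cat_stacks u (proj1_sig x).1, cat_states u (proj1_sig x).2) (Pl_cat_states u x)
  end.

Definition glued z := pwalk (sigma ++ rho, i) (glue z).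
Arguments glued : simpl never.

Lemma glued_inl x t : glued (inl x) t = lift rho (pwalk a0 x t).
Proof. by case: t. Qed.

Lemma glued_inr_lo u x t :
  t <= size u -> glued (inr (u, x)) t = lift rho (nth a0 (a0 :: u) t).
Proof. by case: t => [|t] //= tu; rewrite /glued /= /cat_stacks /cat_states tu. Qed.

Lemma glued_inr_hi u x t : (last a0 u).1 = [::] ->
  glued (inr (u, x)) (t + size u) = pwalk (rho, (last a0 u).2) x t.
Proof.
move=> last_nil; case: t => [|t].
  rewrite add0n glued_inr_lo // /lift -(last_nth a0) last_nil /=.
  by case: (last a0 u).
by rewrite addSn /glued /= /cat_stacks /cat_states ltnNge leq_addl /= addnK.
Qed.

Definition lhs_term (x : paths) : V :=
  vprod V (path_weights M (sigma ++ rho) i (proj1_sig x).1 (proj1_sig x).2).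

Definition rhs_term (z : paths + seq vertex * paths) : V :=
  match z with
  | inl x => vprod V (path_weights M sigma i (proj1_sig x).1 (proj1_sig x).2)
  | inr (u, x) =>
      if (last a0 u).1 == [::] then
        vscale (fin_weight a0 u)
          (vprod V (path_weights M rho (last a0 u).2 (proj1_sig x).1 (proj1_sig x).2))
      else vzero V
  end.

Definition lhs_support (x : paths) : Prop :=
  is_walk (sigma ++ rho, i) (proj1_sig x).1 (proj1_sig x).2.

Definition rhs_support (z : paths + seq vertex * paths) : Prop :=
  match z with
  | inl x => is_walk a0 (proj1_sig x).1 (proj1_sig x).2
  | inr (u, x) => [/\ fin_walk a0 u, (last a0 u).1 = [::] &
                      is_walk (rho, (last a0 u).2) (proj1_sig x).1 (proj1_sig x).2]
  end.

Lemma rhs_term_nonsupport z : ~ rhs_support z -> rhs_term z = vzero V.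
Proof.
case: z => [x|[u x]] /=; first exact: vprod_nonwalk.
move=> not_supp; case: eqP => // last_nil.
have [u_walk|] := classic (fin_walk a0 u).
  by rewrite vprod_nonwalk ?vscale0r // => x_walk; apply: not_supp.
by move/fin_weight_nonwalk ->; rewrite vscale0l.
Qed.

Lemma glue_support z : rhs_support z -> lhs_support (glue z).
Proof.
move=> z_supp t; change (step (glued z t) (glued z t.+1)).
case: z z_supp => [x|[u x]] z_supp.
  by rewrite !glued_inl; exact: (step_lift rho (z_supp t)).
case: z_supp => /fin_walk_nth u_walk last_nil x_walk; have [tu|ut] := ltnP t (size u).
  by rewrite !glued_inr_lo ?(ltnW tu) //; exact: (step_lift rho (u_walk t tu)).
by rewrite -(subnK ut) -addSn !glued_inr_hi.
Qed.

Lemma lhs_term_glue z : rhs_support z -> lhs_term (glue z) = rhs_term z.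
Proof.
have glueE : lhs_term (glue z) = vprod V (fun t => weight (glued z t) (glued z t.+1)).
  by congr (vprod V); apply: functional_extensionality => t; rewrite path_weightsE.
rewrite glueE; case: z glueE => [x|[u x]] _ z_supp.
  congr (vprod V); apply: functional_extensionality => t.
  by rewrite !glued_inl weight_lift ?path_weightsE.
case: z_supp => /fin_walk_nth u_walk last_nil x_walk.
rewrite /rhs_term last_nil eqxx [LHS](vprod_split V _ (size u)); congr (vscale _ _).
  apply: sprefix_fin_weight => t tu.
  by rewrite !glued_inr_lo ?(ltnW tu) // weight_lift //; exact: u_walk.
congr (vprod V); apply: functional_extensionality => t.
by rewrite -addSn !glued_inr_hi // path_weightsE.
Qed.

Lemma glued_inl_nonrho x t : rhs_support (inl x) -> (glued (inl x) t).1 <> rho.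
Proof.
by move=> x_walk; rewrite glued_inl; exact: cat_nonnil_neq (step_src_nonnil (x_walk t)).
Qed.

Lemma glued_inr_nonrho u x t : rhs_support (inr (u, x)) -> t < size u ->
  (glued (inr (u, x)) t).1 <> rho.
Proof.
case=> /fin_walk_nth u_walk _ _ tu; rewrite glued_inr_lo ?(ltnW tu) //.
exact: cat_nonnil_neq (step_src_nonnil (u_walk t tu)).
Qed.

Lemma glued_inr_rho u x :
  rhs_support (inr (u, x)) -> (glued (inr (u, x)) (size u)).1 = rho.
Proof. by case=> _ last_nil _; rewrite -[size u]add0n glued_inr_hi. Qed.

Lemma glue_inj z1 z2 : rhs_support z1 -> rhs_support z2 -> glue z1 = glue z2 -> z1 = z2.
Proof.
move=> supp1 supp2 e12; have {}e12 t : glued z1 t = glued z2 t by rewrite /glued e12.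
case: z1 z2 supp1 supp2 e12 => [x1|[u1 x1]] [x2|[u2 x2]] supp1 supp2 e12.
- congr inl; apply: (paths_eq_walk (a := a0) (b := a0)) => t.
  by apply: (@can_inj _ _ _ _ (liftK rho)); rewrite -!glued_inl.
- by case: (glued_inl_nonrho (t := size u2) supp1); rewrite e12 glued_inr_rho.
- by case: (glued_inl_nonrho (t := size u1) supp2); rewrite -e12 glued_inr_rho.
have u12 : size u1 = size u2.
  case: (ltngtP (size u1) (size u2)) => // u_lt.
    by case: (glued_inr_nonrho supp2 u_lt); rewrite -e12 glued_inr_rho.
  by case: (glued_inr_nonrho supp1 u_lt); rewrite e12 glued_inr_rho.
have eu : u1 = u2.
  apply: (eq_from_nth (x0 := a0)) => // t tu.
  apply: (@can_inj _ _ _ _ (liftK rho)).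
  by have := e12 t.+1; rewrite !glued_inr_lo // -?u12.
subst u2; congr (inr (u1, _)); case: supp1 => _ last_nil _.
apply: (paths_eq_walk (a := (rho, (last a0 u1).2)) (b := (rho, (last a0 u1).2))) => t.
by rewrite -!glued_inr_hi // e12.
Qed.

Lemma glue_onto_avoiding x : lhs_support x ->
  (forall t, (pwalk (sigma ++ rho, i) x t).1 <> rho) ->
  exists z, rhs_support z /\ glue z = x.
Proof.
case: x => -[pis js] Pjs /= x_walk not_rho.
set w := walk (sigma ++ rho, i) pis js in x_walk not_rho *.
have w_suffix t : exists tau, (w t).1 = tau ++ rho.
  by apply: stack_suffix_until x_walk _ _; [exists sigma | move=> s _; exact: not_rho].
pose y := exist (fun y => Pl l y.2) (fun t => unsuffix rho (pis t), js) Pjs.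
have yE t : pwalk a0 y t = unlift rho (w t).
  by case: t => [|t] //; rewrite /unlift /= unsuffixK.
exists (inl y); split.
  move=> t; rewrite !yE.
  by apply: step_unsuffix; [exact: w_suffix | exact: w_suffix | exact: not_rho | exact: x_walk].
apply: (paths_eq_walk (a := (sigma ++ rho, i)) (b := (sigma ++ rho, i))) => t.
change (glued (inl y) t.+1 = w t.+1); have [tau wt] := w_suffix t.+1.
by rewrite glued_inl yE (unliftK wt).
Qed.

Lemma glue_onto_reaching x m : lhs_support x ->
  (pwalk (sigma ++ rho, i) x m).1 = rho ->
  (forall t, t < m -> (pwalk (sigma ++ rho, i) x t).1 <> rho) ->
  exists z, rhs_support z /\ glue z = x.
Proof.
case: x => -[pis js] Pjs /= x_walk wm_rho not_rho.
set w := walk (sigma ++ rho, i) pis js in x_walk wm_rho not_rho *.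
have w_suffix t : t <= m -> exists tau, (w t).1 = tau ++ rho.
  move=> tm; apply: stack_suffix_until x_walk _ _; first by exists sigma.
  by move=> s st; apply: not_rho; exact: leq_trans st tm.
pose u := [seq unlift rho (w t) | t <- iota 1 m].
have size_u : size u = m by rewrite size_map size_iota.
have nth_u t : t <= m -> nth a0 (a0 :: u) t = unlift rho (w t).
  case: t => [|t] tm /=; first by rewrite /unlift /= unsuffixK.
  by rewrite (nth_map 0) ?size_iota // nth_iota.
have last_u : last a0 u = unlift rho (w m) by rewrite (last_nth a0) size_u nth_u.
have last_nil : (last a0 u).1 = [::] by rewrite last_u /= wm_rho /unsuffix subnn take0.
have Pjs_m : Pl l (fun t => js (t + m)) by apply/(@Pl_shift n l m (fun t => js (t + m)) js).
pose y := exist (fun y => Pl l y.2) (fun t => pis (t + m), fun t => js (t + m)) Pjs_m.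
have yE t : pwalk (rho, (last a0 u).2) y t = w (t + m).
  have wmE : (rho, (w m).2) = w m by rewrite -wm_rho -surjective_pairing.
  by rewrite last_u /= wmE walk_shift.
exists (inr (u, y)); split.
  split=> //; last by move=> t; rewrite !yE addSn; exact: x_walk.
  apply/fin_walk_nth => t; rewrite size_u => tm; rewrite !nth_u ?(ltnW tm) //.
  apply: step_unsuffix; [exact: w_suffix (ltnW tm) | exact: w_suffix tm | | exact: x_walk].
  exact: not_rho.
apply: (paths_eq_walk (a := (sigma ++ rho, i)) (b := (sigma ++ rho, i))) => t.
change (glued (inr (u, y)) t.+1 = w t.+1); have [tm|mt] := leqP t.+1 m.
  have [tau wt] := w_suffix _ tm.
  by rewrite glued_inr_lo ?size_u // nth_u // (unliftK wt).
have -> : t.+1 = (t.+1 - m) + size u by rewrite size_u subnK // ltnW.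
by rewrite glued_inr_hi // yE size_u.
Qed.

Lemma glue_onto x : lhs_support x -> exists z, rhs_support z /\ glue z = x.
Proof.
move=> x_walk.
have [reach|avoid] := classic (exists t, (pwalk (sigma ++ rho, i) x t).1 == rho).
  have [m /eqP wm_rho m_min] := ex_minnP reach.
  apply: glue_onto_reaching x_walk wm_rho _ => t tm /eqP wt_rho.
  by have := m_min t wt_rho; rewrite leqNgt tm.
by apply: glue_onto_avoiding x_walk _ => t wt_rho; apply: avoid; exists t; apply/eqP.
Qed.

Lemma vsum_star_omega_l :
  vsum (fun q : 'I_n => vscale (bmx_star M sigma [::] i q) (omega_l V M l rho q)) =
  vsum (fun w : seq vertex * paths => rhs_term (inr w)).
Proof.
under eq_sum => q do rewrite bmx_starE vsum_scalel.
rewrite exchange_vsum vsum_pair; apply: eq_sum => u.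
case last_u: (last a0 u) => [s q0]; have [s0 | s_nonnil] := eqVneq s [::].
  subst s; rewrite (@vsum_pred1 _ _ _ _ q0); last first.
    by move=> q qq0; rewrite ifN ?vscale0l //; apply/eqP => -[q0q]; apply: qq0.
  by rewrite eqxx /omega_l vsum_scaler /rhs_term last_u.
transitivity (vzero V).
  rewrite -(vsum0 V 'I_n); apply: eq_sum => q.
  by rewrite ifN ?vscale0l //; apply/eqP => -[s0 _]; rewrite s0 eqxx in s_nonnil.
by rewrite -(vsum0 V paths); apply: eq_sum => y; rewrite /rhs_term last_u /= ifN.
Qed.

Lemma omega_l_cat : omega_l V M l (sigma ++ rho) i =
  vadd (omega_l V M l sigma i)
       (vsum (fun q : 'I_n => vscale (bmx_star M sigma [::] i q) (omega_l V M l rho q))).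
Proof.
rewrite vsum_star_omega_l -[omega_l V M l sigma i]/(vsum (fun x : paths => rhs_term (inl x))).
rewrite -vsum_inl_inr -[omega_l V M l _ i]/(vsum lhs_term).
apply: (reindex_vsum_support (PI := lhs_support) (PJ := rhs_support) (h := glue)).
- by move=> x; exact: vprod_nonwalk.
- exact: rhs_term_nonsupport.
- exact: glue_support.
- exact: glue_inj.
- exact: glue_onto.
- exact: lhs_term_glue.
Qed.

End Decomposition.

Definition prefix_term l (p : Gamma) (w : stack) i (j : nat) : V :=
  vsum (fun m : 'I_n =>
    vscale (bmx_star M (take j w) [::] i m) (omega_l V M l [:: nth p w j] m)).

Lemma omega_l_prefix_sum l p w i :
  omega_l V M l (p :: w) i = vsum (fun j : 'I_(size w).+1 => prefix_term l p (p :: w) i j).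
Proof.
elim/last_ind: w i => [|w a IH] i.
  rewrite (vsum_ord_recr 0 (prefix_term l p [:: p] i)) vsum_empty; last by case.
  rewrite vadd0 /prefix_term /= (@vsum_pred1 _ _ _ _ i); last first.
    by move=> m mi; rewrite bmx_star_nil ifN ?vscale0l //; apply/eqP => im; apply: mi.
  by rewrite bmx_star_nil eqxx vscale1.
rewrite size_rcons (vsum_ord_recr (size w).+1 (prefix_term l p (p :: rcons w a) i)).
rewrite -cats1 -cat_cons omega_l_cat IH; congr vadd.
  apply: eq_sum => j.
  by rewrite /prefix_term takel_cat ?nth_cat ?ltn_ord // ltnW.
by rewrite /prefix_term -[(size w).+1]/(size (p :: w)) take_size_cat // nth_cat ltnn subnn.
Qed.

End Pushdown.

Theorem lemma5 (S : CSemiring) (V : CSemimodulePair S) (n : nat) (Gamma : finType)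
    (M : bmx S Gamma n) :
  0 < n -> pushdown_transition M ->
  forall (p : Gamma) (ps : seq Gamma) (l : nat), l <= n ->
  forall i : 'I_n,
    omega_l V M l (p :: ps) i =
    vsum (fun j : 'I_(size (p :: ps)) =>
      vsum (fun m : 'I_n =>
        vscale (bmx_star M (take j (p :: ps)) [::] i m)
               (omega_l V M l [:: nth p (p :: ps) j] m))).
Proof.
move=> _ pushdownM p ps l _ i; exact: omega_l_prefix_sum.
Qed.
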